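(* For fixed positive integers $x$ and $y$, the expected maximum in-degree of the task-dependency graph generated by the $(x,y)$ edge-addition process on $n$ vertices is $\Theta(n)$, and the expected maximum out-degree of this graph is also $\Theta(n)$, as $n\to\infty$.
   Context: A task-dependency graph is a finite directed acyclic graph (no loops, no multiple edges). A vertex is initial if it has in-degree $0$ and terminal if it has out-degree $0$ (an isolated vertex is both). An $(x,y)$ task-dependency graph has exactly $x$ initial and exactly $y$ terminal vertices. The $(x,y)$ edge-addition process on $n$ vertices: start with the empty graph on $\{1,\dots,n\}$ and repeatedly add, uniformly at random, an edge $(a,b)$ with $a<b$ not yet present; if an addition would cause fewer than $x$ initial vertices or fewer than $y$ terminal vertices, it is cancelled. The process halts if the graph after some edge addition is an $(x,y)$ task-dependency graph, or if no more edges can be added; the result is the final graph. *)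

From mathcomp Require Import all_boot all_order all_algebra.
Set Implicit Arguments. Unset Strict Implicit. Unset Printing Implicit Defensive.
Import Order.TTheory GRing.Theory Num.Theory.

(* A graph on vertex set 'I_n (vertices 0..n-1 stand for 1..n) is a set of
   ordered pairs (a,b); the process only ever contains edges with a < b,
   so every graph it produces is acyclic (a task-dependency graph). *)
Definition dgraph (n : nat) := {set 'I_n * 'I_n}.

Definition indeg n (G : dgraph n) (v : 'I_n) : nat :=
  #|[set u : 'I_n | (u, v) \in G]|.
Definition outdeg n (G : dgraph n) (v : 'I_n) : nat :=
  #|[set w : 'I_n | (v, w) \in G]|.

Definition ninit n (G : dgraph n) : nat := #|[set v : 'I_n | indeg G v == 0]|.
Definition nterm n (G : dgraph n) : nat := #|[set v : 'I_n | outdeg G v == 0]|.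

Definition is_xy_tdg (x y : nat) n (G : dgraph n) : bool :=
  (ninit G == x) && (nterm G == y).

(* edges (a,b), a < b, not yet present, whose addition is NOT cancelled *)
Definition addable (x y : nat) n (G : dgraph n) : {set 'I_n * 'I_n} :=
  [set e : 'I_n * 'I_n |
    [&& (e.1 < e.2)%N, e \notin G, (x <= ninit (e |: G))%N
      & (y <= nterm (e |: G))%N]].

Definition halted (x y : nat) n (G : dgraph n) : bool :=
  is_xy_tdg x y G || (addable x y G == set0).

Local Open Scope ring_scope.

(* Expected value of f on the final graph of the process started from G,
   with k steps of fuel.  A cancelled addition leaves the graph unchanged and
   stays cancelled forever (adding edges only decreases the numbers of
   initial/terminal vertices), so the next effective addition is uniform
   among the addable edges. *)
Fixpoint expval (x y : nat) n (f : dgraph n -> rat) (k : nat) (G : dgraph n)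
  : rat :=
  match k with
  | 0 => f G
  | k'.+1 =>
      if halted x y G then f G
      else (\sum_(e in addable x y G) expval x y f k' (e |: G))
             / (#|addable x y G|%:R)
  end.

(* Expectation over the final graph of the (x,y) process on n vertices;
   the process performs at most n(n-1)/2 < n*n additions, so fuel n*n
   suffices. *)
Definition expected_final (x y n : nat) (f : dgraph n -> rat) : rat :=
  expval x y f (n * n) set0.

Definition maxindeg n (G : dgraph n) : nat := \max_(v : 'I_n) indeg G v.
Definition maxoutdeg n (G : dgraph n) : nat := \max_(v : 'I_n) outdeg G v.

Definition bigTheta_n (u : nat -> rat) : Prop :=
  exists (c1 c2 : rat) (N : nat),
    0 < c1 /\ 0 < c2 /\
    forall n : nat, (N <= n)%N -> c1 * n%:R <= u n <= c2 * n%:R.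
Arguments expected_final : clear implicits.

From mathcomp Require Import all_boot all_order all_algebra.
From mathcomp Require Import zify ring lra.
Set Implicit Arguments. Unset Strict Implicit. Unset Printing Implicit Defensive.
Import Order.TTheory GRing.Theory Num.Theory.

(* Upper bound: every degree is below n.  Lower bound for the in-degree, with
   n = m + 1 and [last] the vertex m: while no edge enters the prefix 0..x,
   these x + 1 vertices stay initial, so an edge (a, last) can only be refused
   when a is terminal and there are at most y terminal vertices.  Hence at
   least m - y - indeg last addable edges enter [last], while at most (x+1)^2
   enter the prefix.  With alpha = 1/((x+1)^2 + 1), the potential
   indeg last + alpha (m - y - indeg last) [prefix untouched] is then a
   submartingale of the process.  It starts at alpha (m - y) and ends below the
   maximum in-degree: a process halting with the prefix untouched has
   ninit > x, hence nothing addable, hence a nonpositive bonus.  Out-degrees reduce to in-degrees: reversing the vertex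
   order and the edges maps the (x,y) process to the (y,x) process. *)

Lemma card_ord_ltn n j : (j <= n)%N -> #|[set v : 'I_n | (v < j)%N]| = j.
Proof.
move=> jn; have -> : [set v : 'I_n | (v < j)%N] = widen_ord jn @: 'I_j.
  apply/setP => v; rewrite inE; apply/idP/imsetP => [vj|[i _ ->]] /=.
    by exists (Ordinal vj) => //; apply: val_inj.
  exact: ltn_ord.
by rewrite card_imset ?card_ord // => i k /(congr1 val) /= /val_inj.
Qed.

Section Degrees.
Variable n : nat.
Implicit Types (G : dgraph n) (e : 'I_n * 'I_n) (u v : 'I_n).

Lemma indeg_eq0 G v : (indeg G v == 0) = [forall u, (u, v) \notin G].
Proof.
rewrite /indeg cards_eq0; apply/eqP/forallP => [G0 u|G0].
  by apply/negP => uvG; have := in_set0 u; rewrite -G0 inE uvG.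
by apply/setP => u; rewrite !inE; apply/negbTE.
Qed.

Lemma outdeg_eq0 G v : (outdeg G v == 0) = [forall w, (v, w) \notin G].
Proof.
rewrite /outdeg cards_eq0; apply/eqP/forallP => [G0 w|G0].
  by apply/negP => vwG; have := in_set0 w; rewrite -G0 inE vwG.
by apply/setP => w; rewrite !inE; apply/negbTE.
Qed.

Lemma indeg_setU1 G e v : e \notin G -> indeg (e |: G) v = indeg G v + (e.2 == v).
Proof.
case: e => a b eG; rewrite /indeg /=; have [<-|bv] := eqVneq b v.
  have -> : [set u | (u, b) \in (a, b) |: G] = a |: [set u | (u, b) \in G].
    by apply/setP => u; rewrite !inE xpair_eqE eqxx andbT.
  by rewrite cardsU1 inE eG addnC.
rewrite addn0; apply: eq_card => u; rewrite !inE xpair_eqE.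
by rewrite [v == b]eq_sym (negbTE bv) andbF.
Qed.

Lemma ninit_setU1 G e : ninit (e |: G) = ninit G - (indeg G e.2 == 0).
Proof.
rewrite /ninit.
have -> : [set v | indeg (e |: G) v == 0] = [set v | indeg G v == 0] :\ e.2.
  apply/setP => v; rewrite !inE !indeg_eq0.
  apply/forallP/andP => [eG0|[ve G0] u].
    split; last by apply/forallP => u; move: (eG0 u); rewrite in_setU1 negb_or => /andP[].
    by apply/eqP => ve; have := eG0 e.1; rewrite ve -surjective_pairing setU11.
  rewrite in_setU1 negb_or (forallP G0 u) andbT.
  by apply: contra ve => /eqP <-.
by rewrite [in RHS](cardsD1 e.2) inE addKn.
Qed.

Lemma nterm_setU1 G e : nterm (e |: G) = nterm G - (outdeg G e.1 == 0).
Proof.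
rewrite /nterm.
have -> : [set v | outdeg (e |: G) v == 0] = [set v | outdeg G v == 0] :\ e.1.
  apply/setP => v; rewrite !inE !outdeg_eq0.
  apply/forallP/andP => [eG0|[ve G0] w].
    split; last by apply/forallP => w; move: (eG0 w); rewrite in_setU1 negb_or => /andP[].
    by apply/eqP => ve; have := eG0 e.2; rewrite ve -surjective_pairing setU11.
  rewrite in_setU1 negb_or (forallP G0 w) andbT.
  by apply: contra ve => /eqP <-.
by rewrite [in RHS](cardsD1 e.1) inE addKn.
Qed.

Lemma nterm0 : nterm (set0 : dgraph n) = n.
Proof.
rewrite /nterm -[RHS](card_ord n); apply: eq_card => v.
by rewrite !inE outdeg_eq0; apply/forallP => w; rewrite in_set0.
Qed.

Lemma maxindeg_le G : maxindeg G <= n.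
Proof.
by apply/bigmax_leqP => v _; apply: leq_trans (max_card _) _; rewrite card_ord.
Qed.

End Degrees.

Section Reversal.
Variable n : nat.
Implicit Types (G : dgraph n) (e : 'I_n * 'I_n).

Definition rev_edge e : 'I_n * 'I_n := (rev_ord e.2, rev_ord e.1).
Definition rev_graph G : dgraph n := [set e | rev_edge e \in G].

Lemma rev_edgeK : involutive rev_edge.
Proof. by case=> a b; rewrite /rev_edge /= !rev_ordK. Qed.

Lemma rev_edge_inj : injective rev_edge.
Proof. exact: inv_inj rev_edgeK. Qed.

Lemma rev_graphK : involutive rev_graph.
Proof. by move=> G; apply/setP => e; rewrite !inE rev_edgeK. Qed.

Lemma rev_graph0 : rev_graph set0 = set0.
Proof. by apply/setP => e; rewrite !inE. Qed.

Lemma rev_graph_setU1 G e : rev_graph (e |: G) = rev_edge e |: rev_graph G.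
Proof.
apply/setP => f; rewrite !inE; congr (_ || _).
by rewrite -[in RHS](inj_eq rev_edge_inj) rev_edgeK.
Qed.

Lemma indeg_rev_graph G v : indeg (rev_graph G) v = outdeg G (rev_ord v).
Proof.
rewrite /indeg /outdeg -[RHS](card_preimset _ rev_ord_inj).
by apply: eq_card => u; rewrite !inE.
Qed.

Lemma outdeg_rev_graph G v : outdeg (rev_graph G) v = indeg G (rev_ord v).
Proof.
rewrite /indeg /outdeg -[RHS](card_preimset _ rev_ord_inj).
by apply: eq_card => w; rewrite !inE.
Qed.

Lemma ninit_rev_graph G : ninit (rev_graph G) = nterm G.
Proof.
rewrite /ninit /nterm -[RHS](card_preimset _ rev_ord_inj).
by apply: eq_card => v; rewrite !inE indeg_rev_graph.
Qed.

Lemma nterm_rev_graph G : nterm (rev_graph G) = ninit G.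
Proof.
rewrite /ninit /nterm -[RHS](card_preimset _ rev_ord_inj).
by apply: eq_card => v; rewrite !inE outdeg_rev_graph.
Qed.

Lemma maxindeg_rev_graph G : maxindeg (rev_graph G) = maxoutdeg G.
Proof.
rewrite /maxindeg /maxoutdeg (reindex_inj rev_ord_inj) /=.
by apply: eq_bigr => v _; rewrite indeg_rev_graph rev_ordK.
Qed.

Lemma addable_rev_graph x y G : addable y x (rev_graph G) = rev_edge @: addable x y G.
Proof.
rewrite (can2_imset_pre _ rev_edgeK rev_edgeK); apply/setP => e.
rewrite !inE -[e in e |: _]rev_edgeK -rev_graph_setU1.
rewrite ninit_rev_graph nterm_rev_graph [_ && (y <= _)]andbC.
congr (_ && _); case: e => a b /=; have := ltn_ord a; have := ltn_ord b; lia.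
Qed.

Lemma halted_rev_graph x y G : halted y x (rev_graph G) = halted x y G.
Proof.
rewrite /halted /is_xy_tdg addable_rev_graph imset_eq0.
by rewrite ninit_rev_graph nterm_rev_graph andbC.
Qed.

Lemma expval_rev_graph x y (f g : dgraph n -> rat) :
  (forall G, g G = f (rev_graph G)) ->
  forall k G, expval y x g k (rev_graph G) = expval x y f k G.
Proof.
move=> gf; elim=> [|k IH] G /=; first by rewrite gf rev_graphK.
rewrite halted_rev_graph; case: ifP => _; first by rewrite gf rev_graphK.
rewrite addable_rev_graph card_imset; last exact: rev_edge_inj.
rewrite big_imset /=; last by move=> e1 e2 _ _; apply: rev_edge_inj.
by congr (_ / _)%R; apply: eq_bigr => e _; rewrite -rev_graph_setU1 IH.
Qed.

End Reversal.

Local Open Scope ring_scope.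

Lemma expected_maxoutdeg x y n :
  expected_final x y n (fun G => (maxoutdeg G)%:R)
  = expected_final y x n (fun G => (maxindeg G)%:R).
Proof.
rewrite /expected_final -{1}(rev_graph0 n); apply: expval_rev_graph => G.
by rewrite maxindeg_rev_graph.
Qed.

Section ExpectationBounds.
Variables x y n : nat.
Implicit Types (G : dgraph n) (f Phi : dgraph n -> rat).

Lemma addable_gt0 G : ~~ halted x y G -> (0 < #|addable x y G|)%N.
Proof. by rewrite /halted negb_or card_gt0 => /andP[]. Qed.

Lemma expval_le f B : (forall G, f G <= B) -> forall k G, expval x y f k G <= B.
Proof.
move=> fB; elim=> [|k IH] G /=; first exact: fB.
case: ifPn => halt; first exact: fB.
rewrite ler_pdivrMr ?ltr0n ?addable_gt0 // mulr_natr -sumr_const.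
by apply: ler_sum => e _; apply: IH.
Qed.

Definition missing_edges G : {set 'I_n * 'I_n} :=
  [set e : 'I_n * 'I_n | (e.1 < e.2)%N && (e \notin G)].

Lemma addable_sub_missing G : addable x y G \subset missing_edges G.
Proof. by apply/subsetP => e; rewrite !inE => /and4P[-> -> _ _]. Qed.

Lemma card_missing_setU1 G e :
  e \in addable x y G -> (#|missing_edges (e |: G)| < #|missing_edges G|)%N.
Proof.
move=> eA; apply: proper_card; apply/properP; split.
  by apply/subsetP => f; rewrite !inE negb_or => /andP[-> /andP[_ ->]].
exists e; first exact: subsetP (addable_sub_missing G) e eA.
by rewrite !inE eqxx andbF.
Qed.

Lemma expected_final_ge_submartingale f Phi (I : pred (dgraph n)) :
  (forall G e, I G -> e \in addable x y G -> I (e |: G)) ->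
  (forall G, I G -> halted x y G -> Phi G <= f G) ->
  (forall G, I G -> ~~ halted x y G ->
     Phi G * #|addable x y G|%:R <= \sum_(e in addable x y G) Phi (e |: G)) ->
  I set0 -> Phi set0 <= expected_final x y n f.
Proof.
move=> I_step Phi_halted Phi_step I0.
suff Phi_le : forall k G, I G -> (#|missing_edges G| <= k)%N -> Phi G <= expval x y f k G.
  by apply: Phi_le I0 _; apply: leq_trans (max_card _) _; rewrite card_prod card_ord.
elim=> [|k IH] G IG /= Gk.
  apply: Phi_halted => //; apply/orP; right; rewrite -subset0.
  by apply: subset_trans (addable_sub_missing G) _; rewrite subset0 -cards_eq0 -leqn0.
case: ifPn => halt; first exact: Phi_halted.
rewrite ler_pdivlMr ?ltr0n ?addable_gt0 //; apply: le_trans (Phi_step _ IG halt) _.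
apply: ler_sum => e eA; apply: IH; first exact: I_step.
by rewrite -ltnS; apply: leq_trans (card_missing_setU1 eA) Gk.
Qed.

End ExpectationBounds.

Lemma sum_indicator (T : finType) (A : {set T}) (b : pred T) :
  \sum_(t in A) (b t)%:R = #|[set t in A | b t]|%:R :> rat.
Proof.
rewrite -sumr_const big_mkcond [RHS]big_mkcond /=.
by apply: eq_bigr => t _; rewrite !inE; case: (t \in A); case: (b t).
Qed.

Section InDegreeLowerBound.
Variables x y m : nat.
Hypothesis x_lt_m : (x < m)%N.
Local Notation last := (@ord_max m).
Implicit Types (G : dgraph m.+1) (e : 'I_m.+1 * 'I_m.+1).

Definition avoids_prefix G := [forall e in G, (x < e.2)%N].

Lemma avoids_prefix_setU1 G e :
  avoids_prefix (e |: G) = (x < e.2)%N && avoids_prefix G.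
Proof.
apply/forall_inP/andP => [avG|[ex /forall_inP avG] f].
  split; first by apply: avG; rewrite setU11.
  by apply/forall_inP => f fG; apply: avG; rewrite setU1r.
by rewrite in_setU1 => /orP[/eqP ->|]; [exact: ex | exact: avG].
Qed.

Lemma avoids_prefix_ninit G : avoids_prefix G -> (x < ninit G)%N.
Proof.
move=> /forall_inP avG; rewrite /ninit -(@card_ord_ltn m.+1 x.+1 (ltnW x_lt_m)).
apply: subset_leq_card; apply/subsetP => v; rewrite !inE indeg_eq0 => vx.
by apply/forallP => u; apply/negP => /avG /=; rewrite ltnNge -ltnS vx.
Qed.

Lemma card_addable_into_last G : avoids_prefix G -> (y <= nterm G)%N ->
  (m <= #|[set e in addable x y G | e.2 == last]| + y + indeg G last)%N.
Proof.
move=> avG yG.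
set S := [set e in addable x y G | e.2 == last].
set B := if (nterm G <= y)%N then [set v | outdeg G v == 0] else set0.
set P := [set u | (u, last) \notin G].
have cardB : (#|B| <= y)%N by rewrite /B; case: ifP => [//|_]; rewrite cards0.
have cardP : (#|P| + indeg G last)%N = m.+1.
  have -> : P = ~: [set u | (u, last) \in G] by apply/setP => u; rewrite !inE.
  by rewrite /indeg addnC cardsC card_ord.
(* Adding (a, last) keeps the prefix initial, so it can only push nterm below y. *)
have P_sub : P :\ last \subset (fst @: S) :|: B.
  apply/subsetP => a; rewrite !inE => /andP[a_last aG].
  case aB: (a \in B); first by rewrite orbT.
  apply/orP; left; apply/imsetP; exists (a, last) => //.
  rewrite !inE eqxx andbT /= aG ninit_setU1 nterm_setU1 /=.
  apply/and3P; split.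
  - by move: a_last (ltn_ord a); rewrite -(inj_eq val_inj) /=; lia.
  - by have := avoids_prefix_ninit avG; lia.
  - by move: aB; rewrite /B; case: leqP => Gy; rewrite inE; [move=> -> | move=> _]; lia.
have : (#|P| <= 1 + (#|S| + y))%N.
  rewrite (cardsD1 last P) leq_add ?leq_b1 //.
  apply: leq_trans (subset_leq_card P_sub) _; rewrite cardsU.
  exact: leq_trans (leq_subr _ _) (leq_add (leq_imset_card _ _) cardB).
by move: cardP; lia.
Qed.

Lemma card_addable_into_prefix G :
  (#|[set e in addable x y G | (e.2 <= x)%N]| <= x.+1 * x.+1)%N.
Proof.
set low := [set v : 'I_m.+1 | (v < x.+1)%N].
apply: (@leq_trans #|setX low low|).
  apply: subset_leq_card; apply/subsetP => e; rewrite !inE => /andP[/and4P[e12 _ _ _] e2x].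
  by rewrite !ltnS e2x (leq_trans (ltnW e12) e2x).
by rewrite cardsX (@card_ord_ltn m.+1 x.+1 (ltnW x_lt_m)).
Qed.

Definition alpha : rat := ((x.+1 * x.+1).+1)%:R^-1.

Lemma alpha_gt0 : 0 < alpha.
Proof. by rewrite invr_gt0 ltr0n. Qed.

Lemma one_sub_alpha : 1 - alpha = alpha * (x.+1 * x.+1)%:R.
Proof.
have nz : ((x.+1 * x.+1).+1)%:R != 0 :> rat by rewrite pnatr_eq0.
apply: (mulfI nz); rewrite mulrBr mulr1 mulrA mulfV // mul1r.
by rewrite -natr1 addrK.
Qed.

Definition slack G : rat := m%:R - y%:R - (indeg G last)%:R.

Definition potential G : rat :=
  (indeg G last)%:R + (if avoids_prefix G then alpha * slack G else 0).

Lemma potential_setU1 G e : avoids_prefix G -> e \notin G ->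
  potential (e |: G) = potential G + (e.2 == last)%:R * (1 - alpha)
                       - (e.2 <= x)%N%:R * (alpha * slack G).
Proof.
move=> avG eG; rewrite /potential /slack avoids_prefix_setU1 avG andbT indeg_setU1 //.
have [->|_] := eqVneq e.2 last.
  by rewrite /= x_lt_m leqNgt x_lt_m natrD /=; ring.
by rewrite /= addn0 ltnNge; case: (e.2 <= x)%N => /=; ring.
Qed.

Lemma potential_halted G : (y <= nterm G)%N -> halted x y G ->
  potential G <= (maxindeg G)%:R.
Proof.
move=> yG halt.
have indeg_max : (indeg G last)%:R <= (maxindeg G)%:R :> rat.
  by rewrite ler_nat; exact: (@leq_bigmax _ (fun v => indeg G v) last).
rewrite /potential; case: ifPn => avG; last by rewrite addr0.
have A0 : addable x y G = set0.
  move: halt => /orP[/andP[/eqP ninitG _]|/eqP //].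
  by have := avoids_prefix_ninit avG; rewrite ninitG ltnn.
have slack_le0 : slack G <= 0.
  move: (card_addable_into_last avG yG); rewrite A0.
  rewrite (eq_card0 (_ : _ =i pred0)) => [|e]; last by rewrite !inE.
  by rewrite -(ler_nat rat) !natrD /slack; lra.
have := mulr_ge0_le0 (ltW alpha_gt0) slack_le0; lra.
Qed.

Lemma potential_step G : (y <= nterm G)%N ->
  potential G * #|addable x y G|%:R <= \sum_(e in addable x y G) potential (e |: G).
Proof.
move=> yG; have [avG|avG] := boolP (avoids_prefix G); last first.
  rewrite mulr_natr -sumr_const; apply: ler_sum => e; rewrite inE => /and4P[_ eG _ _].
  rewrite /potential avoids_prefix_setU1 (negbTE avG) andbF !addr0.
  by rewrite ler_nat indeg_setU1 // leq_addr.
rewrite (eq_bigr (fun e => potential G + (e.2 == last)%:R * (1 - alpha)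
                          - (e.2 <= x)%N%:R * (alpha * slack G))); last first.
  by move=> e; rewrite inE => /and4P[_ eG _ _]; apply: potential_setU1.
rewrite sumrB big_split /= sumr_const -!mulr_suml mulr_natr !sum_indicator.
have into_last := card_addable_into_last avG yG.
have into_prefix := card_addable_into_prefix G.
move: into_last into_prefix; set Q := #|_|; set R := #|_| => into_last into_prefix.
have slack_le : slack G <= Q%:R.
  by move: into_last; rewrite -(ler_nat rat) !natrD /slack; lra.
have R_le : R%:R <= (x.+1 * x.+1)%:R :> rat by rewrite ler_nat.
have loss_le_gain : R%:R * slack G <= Q%:R * (x.+1 * x.+1)%:R.
  have [s_le0|s_gt0] := lerP (slack G) 0.
    exact: le_trans (mulr_ge0_le0 (ler0n _ _) s_le0) (mulr_ge0 (ler0n _ _) (ler0n _ _)).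
  apply: le_trans (ler_wpM2r (ltW s_gt0) R_le) _.
  by rewrite [Q%:R * _]mulrC ler_wpM2l.
rewrite one_sub_alpha -addrA lerDl mulrCA [R%:R * _]mulrCA -mulrBr.
by rewrite mulr_ge0 ?subr_ge0 // ltW ?alpha_gt0.
Qed.

Lemma expected_maxindeg_ge : (y <= m.+1)%N ->
  alpha * (m%:R - y%:R) <= expected_final x y m.+1 (fun G => (maxindeg G)%:R).
Proof.
move=> y_le.
have avoids0 : avoids_prefix set0 by apply/forall_inP => e; rewrite inE.
have indeg0 : indeg (set0 : dgraph m.+1) last = 0%N.
  by apply/eqP; rewrite indeg_eq0; apply/forallP => u; rewrite inE.
have := @expected_final_ge_submartingale x y m.+1 _ potential (fun G => y <= nterm G)%N.
rewrite /potential avoids0 /slack indeg0 add0r subr0; apply.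
- by move=> G e _; rewrite inE => /and4P[].
- exact: potential_halted.
- by move=> G yG _; apply: potential_step.
- by rewrite nterm0.
Qed.

End InDegreeLowerBound.

Lemma eq_bigTheta_n (u v : nat -> rat) :
  (forall n, u n = v n) -> bigTheta_n u -> bigTheta_n v.
Proof.
move=> uv [c1 [c2 [N [c1_gt0 [c2_gt0 uN]]]]].
by exists c1, c2, N; split=> //; split=> // n /uN; rewrite uv.
Qed.

Lemma expected_maxindeg_bigTheta x y :
  bigTheta_n (fun n => expected_final x y n (fun G => (maxindeg G)%:R)).
Proof.
exists (alpha x / 2), 1, (2 * (x + y)).+2.
split; first by rewrite divr_gt0 ?alpha_gt0.
split=> // -[//|m] n_ge; apply/andP; split.
- apply: le_trans (expected_maxindeg_ge _ _); [|lia|lia].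
  rewrite -mulrA; apply: ler_wpM2l; first exact/ltW/alpha_gt0.
  have : (m.+1 + 2 * y)%N%:R <= (2 * m)%N%:R :> rat by rewrite ler_nat; lia.
  by rewrite !natrD; lra.
- by rewrite mul1r; apply: expval_le => G; rewrite ler_nat maxindeg_le.
Qed.

Theorem mainTheorem16 (x y : nat) (hx : (0 < x)%N) (hy : (0 < y)%N) :
  bigTheta_n (fun n => expected_final x y n (fun G : dgraph n => ((maxindeg G)%:R : rat)))
  /\ bigTheta_n (fun n => expected_final x y n (fun G : dgraph n => ((maxoutdeg G)%:R : rat))).
Proof.
split; first exact: expected_maxindeg_bigTheta.
apply: eq_bigTheta_n (expected_maxindeg_bigTheta y x) => n.
by rewrite expected_maxoutdeg.
Qed.
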